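(* Let $\Sigma$ be an alphabet, $(\mathcal{O},d)$ a pseudometric space, $\epsilon\ge 0$, and let $T=(S,i,\Delta,\omega)$ and $T'=(S',i',\Delta',\omega')$ be transition systems with observations. The following are equivalent: (1) $T$ and $T'$ are $\epsilon$-open bisimilar, i.e. there exist a transition system with observations $T''$, reals $\epsilon_1,\epsilon_2\ge0$ with $\epsilon_1+\epsilon_2=\epsilon$, an $\epsilon_1$-bounded $\mathbf{Lin}_{\Sigma}\mathcal{O}$-open morphism $T''\to T$ and an $\epsilon_2$-bounded $\mathbf{Lin}_{\Sigma}\mathcal{O}$-open morphism $T''\to T'$; (2) there is an $\epsilon$-approximate bisimulation between $T$ and $T'$, i.e. a strong bisimulation $R\subseteq S\times S'$ between $(S,i,\Delta)$ and $(S',i',\Delta')$ such that $d(\omega(s),\omega'(s'))\le\epsilon$ for all $(s,s')\in R$; (3) there exist a transition system with observations $T''$, a $0$-bounded $\mathbf{Lin}_{\Sigma}\mathcal{O}$-open morphism $T''\to T$ and an $\epsilon$-bounded $\mathbf{Lin}_{\Sigma}\mathcal{O}$-open morphism $T''\to T'$.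
   Context: A (labelled) transition system over $\Sigma$ is a triple $(S,i,\Delta)$ with $i\in S$ and $\Delta\subseteq S\times\Sigma\times S$; a morphism is a function on states preserving the initial state and transitions. A strong bisimulation between $(S,i,\Delta)$ and $(S',i',\Delta')$ is a relation $R\subseteq S\times S'$ with $(i,i')\in R$ such that whenever $(s,s')\in R$: for every $(s,a,t)\in\Delta$ there is $(s',a,t')\in\Delta'$ with $(t,t')\in R$, and for every $(s',a,t')\in\Delta'$ there is $(s,a,t)\in\Delta$ with $(t,t')\in R$. A transition system with observations is $(S,i,\Delta,\omega)$ with $(S,i,\Delta)$ a transition system and $\omega:S\to\mathcal{O}$. An $\epsilon$-bounded morphism $(S,i,\Delta,\omega)\to(S',i',\Delta',\omega')$ is a transition system morphism $f$ with $d(\omega(s),\omega'(f(s)))\le\epsilon$ for all $s$; bounded means $\epsilon$-bounded for some $\epsilon\ge0$; these form the category $\mathbf{TS}_{\Sigma}\mathcal{O}$. For $w=a_1\cdots a_n\in\Sigma^*$, $L(w)$ is the transition system with states $0,\dots,n$, initial state $0$, transitions $(j-1,a_j,j)$. $\mathbf{Lin}_{\Sigma}\mathcal{O}$ is the full subcategory of $\mathbf{TS}_{\Sigma}\mathcal{O}$ of systems whose underlying transition system is some $L(w)$. A morphism $f:X\to Y$ of a category $\mathcal{M}$ is $\mathcal{P}$-open (for a subcategory $\mathcal{P}$) if for every $e:P\to P'$ in $\mathcal{P}$ and $p:P\to X$, $q':P'\to Y$ with $f\circ p=q'\circ e$, there is $q:P'\to X$ with $q\circ e=p$ and $f\circ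 q=q'$. *)

From Stdlib Require Import Reals List.
Open Scope R_scope.
Set Implicit Arguments.

Definition is_pseudometric (O : Type) (d : O -> O -> R) : Prop :=
  (forall x, d x x = 0) /\ (forall x y, d x y = d y x) /\
  (forall x y z, d x z <= d x y + d y z).

Record TSO (Sig O : Type) := mkTSO {
  st : Type;
  init : st;
  trans : st -> Sig -> st -> Prop;
  obs : st -> O }.
Arguments st {Sig O}.
Arguments init {Sig O}.
Arguments trans {Sig O}.
Arguments obs {Sig O}.

Section Defs.
Variables (Sig O : Type) (d : O -> O -> R).

Definition ts_morph (T T' : TSO Sig O) (f : st T -> st T') : Prop :=
  f (init T) = init T' /\
  (forall s a t, trans T s a t -> trans T' (f s) a (f t)).

Definition eps_bounded (eps : R) (T T' : TSO Sig O) (f : st T -> st T') : Prop :=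
  ts_morph T T' f /\ forall s, d (obs T s) (obs T' (f s)) <= eps.

Definition bounded_morph (T T' : TSO Sig O) (f : st T -> st T') : Prop :=
  exists eps, 0 <= eps /\ eps_bounded eps T T' f.

Definition lin_st (w : list Sig) : Type := { j : nat | (j <= length w)%nat }.

Definition lin_init (w : list Sig) : lin_st w :=
  exist _ 0%nat (Nat.le_0_l (length w)).

Definition lin_trans (w : list Sig) (x : lin_st w) (a : Sig) (y : lin_st w) : Prop :=
  proj1_sig y = S (proj1_sig x) /\ nth_error w (proj1_sig x) = Some a.

Definition linTSO (w : list Sig) (om : lin_st w -> O) : TSO Sig O :=
  @mkTSO Sig O (lin_st w) (lin_init w) (@lin_trans w) om.

Definition lin_open (T T' : TSO Sig O) (f : st T -> st T') : Prop :=
  forall (w : list Sig) (om : lin_st w -> O) (w' : list Sig) (om' : lin_st w' -> O)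
         (e : lin_st w -> lin_st w') (p : lin_st w -> st T) (q' : lin_st w' -> st T'),
    bounded_morph (linTSO om) (linTSO om') e ->
    bounded_morph (linTSO om) T p ->
    bounded_morph (linTSO om') T' q' ->
    (forall x, f (p x) = q' (e x)) ->
    exists q : lin_st w' -> st T,
      bounded_morph (linTSO om') T q /\
      (forall x, q (e x) = p x) /\
      (forall x, f (q x) = q' x).

Definition strong_bisim (T T' : TSO Sig O) (Rel : st T -> st T' -> Prop) : Prop :=
  Rel (init T) (init T') /\
  forall s s', Rel s s' ->
    (forall a t, trans T s a t -> exists t', trans T' s' a t' /\ Rel t t') /\
    (forall a t', trans T' s' a t' -> exists t, trans T s a t /\ Rel t t').

Definition approx_bisim (eps : R) (T T' : TSO Sig O) : Prop :=
  exists Rel : st T -> st T' -> Prop,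
    strong_bisim T T' Rel /\ forall s s', Rel s s' -> d (obs T s) (obs T' s') <= eps.

Definition eps_open_bisimilar (eps : R) (T T' : TSO Sig O) : Prop :=
  exists (T'' : TSO Sig O) (eps1 eps2 : R) (f : st T'' -> st T) (g : st T'' -> st T'),
    0 <= eps1 /\ 0 <= eps2 /\ eps1 + eps2 = eps /\
    eps_bounded eps1 T'' T f /\ lin_open T'' T f /\
    eps_bounded eps2 T'' T' g /\ lin_open T'' T' g.

Definition zero_eps_open_span (eps : R) (T T' : TSO Sig O) : Prop :=
  exists (T'' : TSO Sig O) (f : st T'' -> st T) (g : st T'' -> st T'),
    eps_bounded 0 T'' T f /\ lin_open T'' T f /\
    eps_bounded eps T'' T' g /\ lin_open T'' T' g.

End Defs.

(* A morphism is Lin-open exactly when it lifts transitions out of every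
   reachable state: openness against the inclusion L(w) -> L(w a) lifts one
   transition, and conversely a path can be lifted step by step.  Hence, for a
   span f : T'' -> T, g : T'' -> T' of open morphisms, the pairs (f u, g u) with
   u reachable form a strong bisimulation, and the triangle inequality through
   the observation of u bounds the distance of observations by eps1 + eps2.
   Conversely, an eps-approximate bisimulation R, viewed as a transition system
   on its own pairs observed through T, has projections that lift transitions;
   they form a 0-bounded and an eps-bounded open morphism. *)
From Stdlib Require Import Reals.
From Stdlib Require Import Lia Lra List Arith RList ClassicalEpsilon.
Open Scope R_scope.

Section LinearSystems.
Set Implicit Arguments. Unset Strict Implicit.
Variable Sig : Type.

(* Out of range, [lin_at w n] is the junk value [lin_init w]. *)
Definition lin_at (w : list Sig) (n : nat) : lin_st w :=
  match le_dec n (length w) with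
  | left h => exist _ n h
  | right _ => lin_init w
  end.

Lemma lin_st_inj (w : list Sig) (x y : lin_st w) : proj1_sig x = proj1_sig y -> x = y.
Proof.
  destruct x as [m hm], y as [n hn]; simpl; intros <-.
  f_equal; apply Peano_dec.le_unique.
Qed.

Lemma lin_at_val (w : list Sig) n : (n <= length w)%nat -> proj1_sig (lin_at w n) = n.
Proof. intros; unfold lin_at; destruct le_dec; [reflexivity | contradiction]. Qed.

Lemma lin_atK (w : list Sig) (x : lin_st w) : lin_at w (proj1_sig x) = x.
Proof. apply lin_st_inj, lin_at_val, proj2_sig. Qed.

Lemma lin_at0 (w : list Sig) : lin_at w 0 = lin_init w.
Proof. apply lin_st_inj; rewrite lin_at_val; simpl; lia. Qed.

Lemma lin_trans_at (w : list Sig) n a :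
  nth_error w n = Some a -> lin_trans (lin_at w n) a (lin_at w (S n)).
Proof.
  intros Hwn.
  assert (n < length w)%nat by (apply nth_error_Some; congruence).
  unfold lin_trans; rewrite !lin_at_val by lia; auto.
Qed.

Definition lin_incl (w w' : list Sig) (x : lin_st w) : lin_st w' := lin_at w' (proj1_sig x).

Lemma lin_incl_app (O : Type) (w u : list Sig) (om : lin_st w -> O) (om' : lin_st (w ++ u) -> O) :
  ts_morph (linTSO om) (linTSO om') (lin_incl (w ++ u)).
Proof.
  assert (Hval : forall x : lin_st w, proj1_sig (lin_incl (w ++ u) x) = proj1_sig x).
  { intros [n hn]; apply lin_at_val; rewrite length_app; simpl; lia. }
  split.
  - apply lin_st_inj; rewrite Hval; reflexivity.
  - intros x a y [Hxy Hwx]; split; simpl; rewrite !Hval; auto.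
    rewrite nth_error_app1; auto.
    apply nth_error_Some; congruence.
Qed.

End LinearSystems.

Section LinOpen.
Set Implicit Arguments. Unset Strict Implicit.
Variables (Sig O : Type) (d : O -> O -> R).

Lemma lin_state_upper_bound (w : list Sig) (F : lin_st w -> R) :
  exists M, 0 <= M /\ forall x, F x <= M.
Proof.
  set (l := map (fun n => F (lin_at w n)) (seq 0 (S (length w)))).
  exists (Rmax 0 (MaxRlist l)); split; [apply Rmax_l |].
  intros x; rewrite <- (lin_atK x).
  eapply Rle_trans; [apply MaxRlist_P1 | apply Rmax_r].
  apply (in_map (fun n => F (lin_at w n))), in_seq.
  destruct x as [n hn]; simpl; lia.
Qed.

Lemma lin_morph_bounded (w : list Sig) (om : lin_st w -> O) (T : TSO Sig O) h :
  ts_morph (linTSO om) T h -> bounded_morph d (linTSO om) T h.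
Proof.
  intros Hh.
  destruct (lin_state_upper_bound (fun x => d (om x) (obs T (h x)))) as [M [HM HF]].
  exists M; repeat split; auto; apply Hh.
Qed.

Lemma lin_morph_trans_at (w : list Sig) (om : lin_st w -> O) (T : TSO Sig O) p n a
  (Hp : ts_morph (linTSO om) T p) (Hwn : nth_error w n = Some a) :
  trans T (p (lin_at w n)) a (p (lin_at w (S n))).
Proof. apply Hp, lin_trans_at, Hwn. Qed.

Section LinMorph.
Variables (w w' : list Sig) (om : lin_st w -> O) (om' : lin_st w' -> O).
Variable e : lin_st w -> lin_st w'.
Hypothesis He : ts_morph (linTSO om) (linTSO om') e.

Lemma lin_morph_index x : proj1_sig (e x) = proj1_sig x.
Proof.
  rewrite <- (lin_atK x) at 1; destruct x as [n hn]; simpl.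
  induction n as [| n IHn].
  - rewrite lin_at0; change (lin_init w) with (init (linTSO om)).
    rewrite (proj1 He); reflexivity.
  - destruct (nth_error w n) as [a |] eqn:Hwn.
    + destruct (lin_morph_trans_at He Hwn) as [Hsucc _].
      rewrite Hsucc, IHn by lia; reflexivity.
    + apply nth_error_None in Hwn; lia.
Qed.

Lemma lin_morph_at n : (n <= length w)%nat -> e (lin_at w n) = lin_at w' n.
Proof.
  intros Hn; apply lin_st_inj.
  rewrite lin_morph_index, lin_at_val by exact Hn; symmetry; apply lin_at_val.
  rewrite <- (lin_at_val Hn), <- lin_morph_index; apply proj2_sig.
Qed.

Lemma lin_morph_prefix n a (Hwn : nth_error w n = Some a) : nth_error w' n = Some a.
Proof.
  destruct (lin_morph_trans_at He Hwn) as [_ Hw'].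
  assert (n < length w)%nat by (apply nth_error_Some; congruence).
  rewrite lin_morph_index, lin_at_val in Hw' by lia; exact Hw'.
Qed.

End LinMorph.

Definition lifts_transitions (U V : TSO Sig O) (h : st U -> st V) : Prop :=
  forall u a v', trans V (h u) a v' -> exists u', trans U u a u' /\ h u' = v'.

Section PathLifting.
Variables (U V : TSO Sig O) (h : st U -> st V).
Hypothesis Hh : lifts_transitions h.

Definition lift_step (u : st U) (a : Sig) (v' : st V) : st U :=
  epsilon (inhabits u) (fun u' => trans U u a u' /\ h u' = v').

Lemma lift_stepP u a v' :
  trans V (h u) a v' -> trans U u a (lift_step u a v') /\ h (lift_step u a v') = v'.
Proof.
  intros Huv.
  exact (epsilon_spec (inhabits u) (fun u' => trans U u a u' /\ h u' = v') (Hh Huv)).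
Qed.

Variables (w w' : list Sig) (om : lin_st w -> O) (om' : lin_st w' -> O).
Variables (e : lin_st w -> lin_st w') (p : lin_st w -> st U) (q' : lin_st w' -> st V).
Hypothesis He : ts_morph (linTSO om) (linTSO om') e.
Hypothesis Hp : ts_morph (linTSO om) U p.
Hypothesis Hq' : ts_morph (linTSO om') V q'.
Hypothesis Hpq' : forall x, h (p x) = q' (e x).

(* Follow [p] along the prefix [w] of [w'], then lift the rest of [q'] one step at a time. *)
Fixpoint lift_path (n : nat) : st U :=
  match n with
  | 0 => p (lin_init w)
  | S m =>
      if le_dec (S m) (length w) then p (lin_at w (S m)) else
      match nth_error w' m with
      | Some a => lift_step (lift_path m) a (q' (lin_at w' (S m)))
      | None => lift_path m
      end
  end.

Lemma lift_path_prefix n : (n <= length w)%nat -> lift_path n = p (lin_at w n).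
Proof.
  destruct n as [| n]; intros Hn; simpl.
  - rewrite lin_at0; reflexivity.
  - destruct le_dec; [reflexivity | contradiction].
Qed.

Lemma lift_path_covers n : (n <= length w')%nat -> h (lift_path n) = q' (lin_at w' n).
Proof.
  induction n as [| n IHn]; intros Hn; simpl.
  - rewrite Hpq', <- (lin_at0 w), (lin_morph_at He) by lia; reflexivity.
  - destruct le_dec as [Hw | Hw].
    + rewrite Hpq', (lin_morph_at He) by exact Hw; reflexivity.
    + destruct (nth_error w' n) as [a |] eqn:Hw'n.
      * apply lift_stepP; rewrite IHn by lia; apply (lin_morph_trans_at Hq' Hw'n).
      * apply nth_error_None in Hw'n; lia.
Qed.

Lemma lift_path_trans n a :
  nth_error w' n = Some a -> trans U (lift_path n) a (lift_path (S n)).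
Proof.
  intros Hw'n.
  assert (n < length w')%nat by (apply nth_error_Some; congruence).
  simpl lift_path at 2; destruct le_dec as [Hw | Hw].
  - destruct (nth_error w n) as [b |] eqn:Hwn; [| apply nth_error_None in Hwn; lia].
    rewrite (lin_morph_prefix He Hwn) in Hw'n; injection Hw'n as <-.
    rewrite lift_path_prefix by lia; apply (lin_morph_trans_at Hp Hwn).
  - rewrite Hw'n; apply lift_stepP.
    rewrite lift_path_covers by lia; apply (lin_morph_trans_at Hq' Hw'n).
Qed.

Lemma lift_path_morph :
  ts_morph (linTSO om') U (fun x => lift_path (proj1_sig x)).
Proof.
  split; [apply Hp |].
  intros x a y [Hxy Hw'x]; simpl; rewrite Hxy; apply lift_path_trans, Hw'x.
Qed.

End PathLifting.

Lemma lifts_transitions_lin_open (U V : TSO Sig O) (h : st U -> st V) :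
  lifts_transitions h -> lin_open d U V h.
Proof.
  intros Hh w om w' om' e p q' [_ [_ [He _]]] [_ [_ [Hp _]]] [_ [_ [Hq' _]]] Hpq'.
  exists (fun x => lift_path h p q' (proj1_sig x)); split; [| split].
  - apply lin_morph_bounded; eapply lift_path_morph; eassumption.
  - intros x; rewrite (lin_morph_index He), lift_path_prefix by apply proj2_sig.
    apply f_equal, lin_atK.
  - intros x; rewrite (lift_path_covers Hh He Hq' Hpq') by apply proj2_sig.
    apply f_equal, lin_atK.
Qed.

Definition reachable (T : TSO Sig O) (u : st T) : Prop :=
  exists w (om : lin_st w -> O) (p : lin_st w -> st T),
    ts_morph (linTSO om) T p /\ p (lin_at w (length w)) = u.

Lemma reachable_init (T : TSO Sig O) : reachable (init T).
Proof.
  exists nil, (fun _ => obs T (init T)), (fun _ => init T); repeat split.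
  intros [n hn] a y [_ Hn]; destruct n; discriminate.
Qed.

Section PathSnoc.
Variables (T : TSO Sig O) (w : list Sig) (a : Sig) (p : lin_st w -> st T) (t : st T).

Definition path_snoc (x : lin_st (w ++ a :: nil)) : st T :=
  if le_dec (proj1_sig x) (length w) then p (lin_at w (proj1_sig x)) else t.

Lemma path_snoc_incl x : path_snoc (lin_incl (w ++ a :: nil) x) = p x.
Proof.
  unfold path_snoc, lin_incl.
  assert (Hx : (proj1_sig x <= length w)%nat) by apply proj2_sig.
  rewrite lin_at_val by (rewrite length_app; simpl; lia).
  destruct le_dec; [apply f_equal, lin_atK | contradiction].
Qed.

Lemma path_snoc_last : path_snoc (lin_at (w ++ a :: nil) (S (length w))) = t.
Proof.
  unfold path_snoc; rewrite lin_at_val by (rewrite length_app; simpl; lia).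
  destruct le_dec; [lia | reflexivity].
Qed.

Lemma path_snoc_morph (om : lin_st w -> O) (om' : lin_st (w ++ a :: nil) -> O) :
  ts_morph (linTSO om) T p -> trans T (p (lin_at w (length w))) a t ->
  ts_morph (linTSO om') T path_snoc.
Proof.
  intros [Hp0 Hp] Hlast; split.
  - unfold path_snoc; simpl.
    destruct (le_dec 0 (length w)) as [_ | Hw]; [| lia].
    rewrite lin_at0; exact Hp0.
  - intros x b y [Hxy Hwx]; simpl in *.
    assert (Hx : (proj1_sig x <= length w)%nat)
      by (pose proof (proj2_sig y) as Hy; simpl in Hy; rewrite length_app in Hy; simpl in Hy; lia).
    unfold path_snoc; rewrite Hxy.
    destruct le_dec; [| lia].
    destruct le_dec as [Hy | Hy].
    + apply Hp; unfold lin_trans; rewrite !lin_at_val by lia; split; auto.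
      rewrite nth_error_app1 in Hwx by lia; exact Hwx.
    + replace (proj1_sig x) with (length w) in * by lia.
      rewrite nth_error_app2, Nat.sub_diag in Hwx by lia.
      injection Hwx as <-; exact Hlast.
Qed.

End PathSnoc.

(* Openness against the inclusion L(w) -> L(w a), where L(w) is a path reaching [u]. *)
Lemma lin_open_lifts_reachable (T'' T : TSO Sig O) (f : st T'' -> st T) :
  ts_morph T'' T f -> lin_open d T'' T f ->
  forall u, reachable u -> forall a t, trans T (f u) a t ->
  exists u', trans T'' u a u' /\ f u' = t /\ reachable u'.
Proof.
  intros Hf Hopen u [w [om [p [Hp <-]]]] a t Ht.
  set (om' := fun _ : lin_st (w ++ a :: nil) => obs T'' (p (lin_init w))).
  assert (Hfp : ts_morph (linTSO om) T (fun x => f (p x))).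
  { split; [rewrite (proj1 Hp); apply Hf | intros x b y Hxy; apply Hf, Hp, Hxy]. }
  destruct (Hopen w om _ om' _ p (path_snoc (fun x => f (p x)) t)
              (lin_morph_bounded (lin_incl_app om om'))
              (lin_morph_bounded Hp)
              (lin_morph_bounded (path_snoc_morph om' Hfp Ht))
              (fun x => eq_sym (path_snoc_incl _ _ _ x)))
    as [q [[_ [_ [Hq _]]] [Hqe Hfq]]].
  assert (Hwa : nth_error (w ++ a :: nil) (length w) = Some a)
    by (rewrite nth_error_app2, Nat.sub_diag by lia; reflexivity).
  exists (q (lin_at (w ++ a :: nil) (S (length w)))); split; [| split].
  - rewrite <- Hqe; unfold lin_incl; rewrite lin_at_val by reflexivity.
    apply (lin_morph_trans_at Hq Hwa).
  - rewrite Hfq; apply path_snoc_last.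
  - exists (w ++ a :: nil), om', q; split; [exact Hq |].
    rewrite length_app, Nat.add_1_r; reflexivity.
Qed.

Lemma open_bisimilar_approx_bisim (Hsym : forall x y, d x y = d y x)
  (Htri : forall x y z, d x z <= d x y + d y z) eps (T T' : TSO Sig O) :
  eps_open_bisimilar d eps T T' -> approx_bisim d eps T T'.
Proof.
  intros [T'' [eps1 [eps2 [f [g [_ [_ [Heps [[Hf Hfd] [Hfo [[Hg Hgd] Hgo]]]]]]]]]]].
  exists (fun s s' => exists u, reachable u /\ f u = s /\ g u = s'); split; [split |].
  - exists (init T''); split; [apply reachable_init | split; [apply Hf | apply Hg]].
  - intros s s' [u [Hu [<- <-]]]; split.
    + intros a t Ht.
      destruct (lin_open_lifts_reachable Hf Hfo Hu Ht) as [u' [Huu' [<- Hu']]].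
      exists (g u'); split; [apply Hg, Huu' | exists u'; auto].
    + intros a t' Ht'.
      destruct (lin_open_lifts_reachable Hg Hgo Hu Ht') as [u' [Huu' [<- Hu']]].
      exists (f u'); split; [apply Hf, Huu' | exists u'; auto].
  - intros s s' [u [_ [<- <-]]].
    eapply Rle_trans; [apply (Htri _ (obs T'' u)) |].
    rewrite Hsym, <- Heps; apply Rplus_le_compat; auto.
Qed.

Definition relation_tso (T T' : TSO Sig O) (Rel : st T -> st T' -> Prop)
  (Hinit : Rel (init T) (init T')) : TSO Sig O :=
  @mkTSO Sig O {x : st T * st T' | Rel (fst x) (snd x)}
    (exist _ (init T, init T') Hinit)
    (fun x a y => trans T (fst (proj1_sig x)) a (fst (proj1_sig y)) /\
                  trans T' (snd (proj1_sig x)) a (snd (proj1_sig y)))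
    (fun x => obs T (fst (proj1_sig x))).

Lemma approx_bisim_zero_eps_open_span (Hd0 : forall x, d x x = 0) eps (T T' : TSO Sig O) :
  approx_bisim d eps T T' -> zero_eps_open_span d eps T T'.
Proof.
  intros [Rel [[Hinit Hback] Hobs]].
  exists (relation_tso Hinit), (fun x => fst (proj1_sig x)), (fun x => snd (proj1_sig x)).
  repeat split.
  - intros x a y Hxy; apply Hxy.
  - intros x; simpl; rewrite Hd0; apply Rle_refl.
  - apply lifts_transitions_lin_open; intros [[s s'] Hss'] a t Ht.
    destruct (proj1 (Hback s s' Hss') a t Ht) as [t' [Ht' Htt']].
    exists (exist _ (t, t') Htt'); simpl; auto.
  - intros x a y Hxy; apply Hxy.
  - intros [[s s'] Hss']; apply Hobs, Hss'.
  - apply lifts_transitions_lin_open; intros [[s s'] Hss'] a t' Ht'.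
    destruct (proj2 (Hback s s' Hss') a t' Ht') as [t [Ht Htt']].
    exists (exist _ (t, t') Htt'); simpl; auto.
Qed.

Lemma zero_eps_open_span_open_bisimilar eps (Heps : 0 <= eps) (T T' : TSO Sig O) :
  zero_eps_open_span d eps T T' -> eps_open_bisimilar d eps T T'.
Proof.
  intros [T'' [f [g Hspan]]].
  exists T'', 0, eps, f, g; repeat split; try lra; apply Hspan.
Qed.

End LinOpen.

Theorem proposition3 (Sig O : Type) (d : O -> O -> R) (Hd : is_pseudometric d)
  (eps : R) (Heps : 0 <= eps) (T T' : TSO Sig O) :
  (eps_open_bisimilar d eps T T' <-> approx_bisim d eps T T') /\
  (approx_bisim d eps T T' <-> zero_eps_open_span d eps T T').
Proof.
  destruct Hd as [Hd0 [Hsym Htri]].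
  pose proof (@open_bisimilar_approx_bisim Sig O d Hsym Htri eps T T') as H12.
  pose proof (@approx_bisim_zero_eps_open_span Sig O d Hd0 eps T T') as H23.
  pose proof (@zero_eps_open_span_open_bisimilar Sig O d eps Heps T T') as H31.
  tauto.
Qed.
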